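(* Let $A>0$ and $0<v_{\mathrm{nozzle}}<1$. For every $w\ge0$, $A\,t_{\mathrm{end}}(w)^2<2/v_{\mathrm{nozzle}}$, and for every $w>0$, $$I(w)<\frac{1}{v_{\mathrm{nozzle}}\sqrt{w}}.$$ Consequently, if $B>0$ and $w>0$ satisfies $I(w)=B$, then $w\le \dfrac{1}{v_{\mathrm{nozzle}}^2B^2}$.
   Context: For $A>0$ and $w\ge0$, $v(\cdot;w):[0,\infty)\to(0,1]$ denotes the unique solution of $v'=-v^2(\sqrt{A^2t^2+w}+v)$, $v(0)=1$; it is strictly decreasing in $t$ and tends to $0$ as $t\to\infty$. For $0<v_{\mathrm{nozzle}}<1$, $t_{\mathrm{end}}(w)>0$ is the unique time with $v(t_{\mathrm{end}}(w);w)=v_{\mathrm{nozzle}}$, and $$I(w)=I(w;A,v_{\mathrm{nozzle}})=\int_0^{t_{\mathrm{end}}(w)}\frac{At\,v(t;w)}{\sqrt{A^2t^2+w}}\,dt.$$ *)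

From Stdlib Require Import Reals.
From Coquelicot Require Import Coquelicot.
Open Scope R_scope.

(* v w t  stands for  v(t;w).  [is_v_solution A v] says that for every w >= 0,
   t |-> v w t solves  v' = -v^2 (sqrt(A^2 t^2 + w) + v),  v(0) = 1  on [0,oo):
   v(0)=1, v is right-continuous at 0, and v is differentiable at every t > 0
   with the prescribed derivative.  (Such a solution is unique on [0,oo).) *)
Definition is_v_solution (A : R) (v : R -> R -> R) : Prop :=
  forall w : R, 0 <= w ->
    v w 0 = 1 /\
    filterlim (v w) (at_right 0) (locally 1) /\
    (forall t : R, 0 < t ->
       is_derive (v w) t (- (v w t) ^ 2 * (sqrt (A ^ 2 * t ^ 2 + w) + v w t))).

Definition is_t_end (v : R -> R -> R) (vn : R) (t_end : R -> R) : Prop :=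
  forall w : R, 0 <= w -> 0 < t_end w /\ v w (t_end w) = vn.

Definition I_int (A : R) (v : R -> R -> R) (t_end : R -> R) (w : R) : R :=
  RInt (fun t => A * t * v w t / sqrt (A ^ 2 * t ^ 2 + w)) 0 (t_end w).

(** A solution of [v' = -v^2 (S + v)], [S t = sqrt (A^2 t^2 + w)], starting
    at [v(0) = 1] stays in [(0, 1]] (Gronwall) and decreases.  Since
    [(1/v)' = S + v >= A t], the function [1/v - A t^2/2] is nondecreasing,
    which gives [A t^2 < 2/v(t)].  Bounding the integrand of [I(w)] by
    [A t / sqrt w] then yields [I(w) <= A t_end^2 / (2 sqrt w)
    < 1 / (v_nozzle sqrt w)], and squaring gives the bound on [w]. *)
From Stdlib Require Import Reals Lra Ranalysis5.
From Coquelicot Require Import Coquelicot.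
Open Scope R_scope.

Lemma nondecreasing_of_derive_nonneg (f df : R -> R) (a b : R) : a <= b ->
  (forall x, a <= x <= b -> is_derive f x (df x)) ->
  (forall x, a <= x <= b -> 0 <= df x) -> f a <= f b.
Proof.
  intros Hab Hf Hdf.
  destruct (MVT_gen f a b df) as [c [Hc Hmvt]];
    rewrite ?Rmin_left, ?Rmax_right in * by lra.
  - intros x Hx. apply Hf. lra.
  - intros x Hx. apply continuity_pt_filterlim.
    apply (@ex_derive_continuous R_AbsRing R_NormedModule).
    eexists. apply Hf. lra.
  - assert (0 <= df c * (b - a)) by (apply Rmult_le_pos; [apply Hdf|]; lra).
    lra.
Qed.

Lemma continuous_sqrt_quad (A w c : R) : 0 <= w ->
  continuous (fun x => sqrt (A ^ 2 * x ^ 2 + w)) c.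
Proof.
  intros Hw. apply continuous_sqrt_comp.
  apply (@ex_derive_continuous R_AbsRing R_NormedModule). auto_derive. easy.
Qed.

Lemma sqrt_quad_ge (A w x : R) : 0 < A -> 0 <= w -> 0 <= x ->
  A * x <= sqrt (A ^ 2 * x ^ 2 + w).
Proof.
  intros. rewrite <- (sqrt_pow2 (A * x)) by nra. apply sqrt_le_1_alt. nra.
Qed.

Lemma le_inv_sq_of_lt_inv_mul_sqrt (B c w : R) : 0 < B -> 0 < c -> 0 < w ->
  B < 1 / (c * sqrt w) -> w <= 1 / (c ^ 2 * B ^ 2).
Proof.
  intros HB Hc Hw HBw.
  assert (Hs : 0 < sqrt w) by (apply sqrt_lt_R0; lra).
  assert (Hlt1 : B * (c * sqrt w) < 1).
  { apply (Rmult_lt_compat_r (c * sqrt w)) in HBw; [|nra].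
    replace (1 / (c * sqrt w) * (c * sqrt w)) with 1 in HBw by (field; lra).
    exact HBw. }
  assert (Hsq : c ^ 2 * B ^ 2 * w < 1).
  { replace w with (sqrt w * sqrt w) by (apply sqrt_sqrt; lra).
    assert (0 < B * (c * sqrt w)) by (apply Rmult_lt_0_compat; nra). nra. }
  assert (0 < c ^ 2 * B ^ 2) by (apply Rmult_lt_0_compat; apply pow_lt; lra).
  apply Rlt_le, (Rmult_lt_reg_l (c ^ 2 * B ^ 2)); [lra|].
  replace (c ^ 2 * B ^ 2 * (1 / (c ^ 2 * B ^ 2))) with 1 by (field; lra). lra.
Qed.

Section Solution.

Variables (A w : R) (v : R -> R).
Hypothesis HA : 0 < A.
Hypothesis Hw : 0 <= w.
Hypothesis Hv_right : filterlim v (at_right 0) (locally 1).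
Hypothesis Hv_derive : forall t : R, 0 < t ->
  is_derive v t (- (v t) ^ 2 * (sqrt (A ^ 2 * t ^ 2 + w) + v t)).

Lemma sol_near_one (eps d : R) : 0 < eps -> 0 < d ->
  exists s, 0 < s < d /\ Rabs (v s - 1) < eps.
Proof.
  intros Heps Hd.
  assert (Hnear : at_right 0 (fun s => Rabs (v s - 1) < eps))
    by exact (Hv_right _ (locally_ball 1 (mkposreal eps Heps))).
  assert (Hsmall : at_right 0 (fun s => 0 < s < d)).
  { exists (mkposreal d Hd). intros s Hs Hs0.
    apply Rabs_def2 in Hs. unfold minus, plus, opp in Hs. simpl in Hs. lra. }
  destruct (Hierarchy.filter_ex _ (filter_and _ _ Hsmall Hnear)) as [s Hs].
  now exists s.
Qed.

Lemma sol_continuous (t : R) : 0 < t -> continuous v t.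
Proof.
  intros Ht. apply (@ex_derive_continuous R_AbsRing R_NormedModule).
  eexists. now apply Hv_derive.
Qed.

(* Gronwall: with [M] a bound of [v (S + v)] on [[s, t]], the function
   [v^2 exp (2 M x)] is nondecreasing there, so [v] cannot reach [0]. *)
Lemma sol_neq0_forward (s t : R) : 0 < s <= t -> v s <> 0 -> v t <> 0.
Proof.
  intros Hst Hvs.
  set (k := fun x => v x * (sqrt (A ^ 2 * x ^ 2 + w) + v x)).
  assert (Hk : forall c, s <= c <= t -> continuity_pt k c).
  { intros c Hc. apply continuity_pt_filterlim.
    apply (continuous_mult v (fun x => sqrt (A ^ 2 * x ^ 2 + w) + v x)).
    - apply sol_continuous. lra.
    - apply (continuous_plus (fun x => sqrt (A ^ 2 * x ^ 2 + w)) v).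
      + now apply continuous_sqrt_quad.
      + apply sol_continuous. lra. }
  destruct (continuity_ab_maj k s t) as [xM [HM _]]; [lra|exact Hk|].
  set (M := k xM).
  set (F := fun x => v x ^ 2 * exp (2 * M * x)).
  assert (HF : F s <= F t).
  { apply (nondecreasing_of_derive_nonneg F
             (fun x => 2 * v x ^ 2 * exp (2 * M * x) * (M - k x))); [lra| |].
    - intros x Hx. unfold F.
      assert (Dv : Derive (fun y => v y) x = - (v x) ^ 2 * (sqrt (A ^ 2 * x ^ 2 + w) + v x))
        by (apply is_derive_unique, Hv_derive; lra).
      auto_derive.
      + eexists. apply Hv_derive. lra.
      + rewrite Dv. unfold k. ring.
    - intros x Hx.
      assert (k x <= M) by (apply HM; lra).
      assert (0 < exp (2 * M * x)) by apply exp_pos.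
      assert (0 <= v x ^ 2) by apply pow2_ge_0.
      apply Rmult_le_pos; [|lra]. apply Rmult_le_pos; [|lra]. lra. }
  assert (0 < F s) by (apply Rmult_lt_0_compat; [apply pow2_gt_0|apply exp_pos]; easy).
  intros Hvt. unfold F at 2 in HF. rewrite Hvt in HF. lra.
Qed.

Lemma sol_pos (t : R) : 0 < t -> 0 < v t.
Proof.
  intros Ht.
  destruct (sol_near_one (1 / 2) t) as [s [Hs Hvs]]; [lra|lra|].
  apply Rabs_def2 in Hvs.
  assert (Hnz : forall r, s <= r <= t -> v r <> 0)
    by (intros r Hr; apply (sol_neq0_forward s r); lra).
  destruct (Rlt_le_dec 0 (v t)) as [|[Hlt|Hvt]]; [easy| |now exfalso; apply (Hnz t); [lra|]].
  exfalso.
  destruct (IVT_interv (fun x => - v x) s t) as [z [Hz Hvz]]; try lra.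
  - intros x Hx. apply continuity_pt_filterlim, (continuous_opp v).
    apply sol_continuous. lra.
  - apply (Hnz z Hz). lra.
Qed.

Lemma sol_nonincreasing (s t : R) : 0 < s <= t -> v t <= v s.
Proof.
  intros Hst.
  cut (- v s <= - v t); [lra|].
  apply (nondecreasing_of_derive_nonneg (fun x => - v x)
           (fun x => v x ^ 2 * (sqrt (A ^ 2 * x ^ 2 + w) + v x))); [lra| |].
  - intros x Hx.
    replace (v x ^ 2 * (sqrt (A ^ 2 * x ^ 2 + w) + v x))
      with (- (- v x ^ 2 * (sqrt (A ^ 2 * x ^ 2 + w) + v x))) by ring.
    apply (is_derive_opp v), Hv_derive. lra.
  - intros x Hx.
    assert (0 < v x) by (apply sol_pos; lra).
    assert (0 <= sqrt (A ^ 2 * x ^ 2 + w)) by apply sqrt_pos.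
    apply Rmult_le_pos; [apply pow2_ge_0|lra].
Qed.

Lemma sol_le_one (t : R) : 0 < t -> v t <= 1.
Proof.
  intros Ht. destruct (Rle_lt_dec (v t) 1) as [|Hgt]; [easy|].
  destruct (sol_near_one (v t - 1) t) as [s [Hs Hvs]]; [lra|lra|].
  apply Rabs_def2 in Hvs.
  assert (v t <= v s) by (apply sol_nonincreasing; lra). lra.
Qed.

(* [(1/v)' = S + v >= A t], so [1/v - A t^2/2] is nondecreasing; its value
   near [0] is close to [1]. *)
Lemma sol_time_bound (T : R) : 0 < T -> A * T ^ 2 < 2 / v T.
Proof.
  intros HT.
  assert (HA1 : 0 < / (A + 1)) by (apply Rinv_0_lt_compat; lra).
  destruct (sol_near_one (1 / 2) (Rmin T (/ (A + 1)))) as [s [Hs Hvs]];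
    [lra|now apply Rmin_glb_lt|].
  assert (HsT : s < T) by (eapply Rlt_le_trans; [apply Hs|apply Rmin_l]).
  assert (HsA : s * (A + 1) < 1).
  { assert (Hs_inv : s < / (A + 1))
      by (eapply Rlt_le_trans; [apply Hs|apply Rmin_r]).
    apply (Rmult_lt_compat_r (A + 1)) in Hs_inv; [|lra].
    now rewrite Rinv_l in Hs_inv by lra. }
  apply Rabs_def2 in Hvs.
  set (u := fun x => / v x - A * x ^ 2 / 2).
  assert (Hu : u s <= u T).
  { apply (nondecreasing_of_derive_nonneg u
             (fun x => sqrt (A ^ 2 * x ^ 2 + w) + v x - A * x)); [lra| |].
    - intros x Hx. unfold u.
      assert (0 < v x) by (apply sol_pos; lra).
      assert (Dv : Derive (fun y => v y) x
                   = - (v x) ^ 2 * (sqrt (A ^ 2 * x ^ 2 + w) + v x))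
        by (apply is_derive_unique, Hv_derive; lra).
      auto_derive.
      + split; [eexists; apply Hv_derive; lra|split; [lra|easy]].
      + rewrite Dv. field. lra.
    - intros x Hx.
      assert (0 < v x) by (apply sol_pos; lra).
      assert (A * x <= sqrt (A ^ 2 * x ^ 2 + w)) by (apply sqrt_quad_ge; lra).
      lra. }
  assert (Hvs_inv : / v s > 2 / 3).
  { assert (0 < v s) by (apply sol_pos; lra).
    apply (Rmult_lt_reg_r (v s)); [easy|]. rewrite Rinv_l; lra. }
  unfold u in Hu. unfold Rdiv. nra.
Qed.

Section Integral.

Hypothesis Hw_pos : 0 < w.

Lemma ex_RInt_sol_integrand (T : R) : 0 <= T ->
  ex_RInt (fun t => A * t * v t / sqrt (A ^ 2 * t ^ 2 + w)) 0 T.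
Proof.
  intros HT.
  destruct (C0_extension_left v 1 0 (T + 1)) as [g [Hg_cont [Hg_v _]]];
    [lra|intros c Hc; apply sol_continuous; lra|easy|].
  apply (ex_RInt_ext (fun t => A * t / sqrt (A ^ 2 * t ^ 2 + w) * g t)).
  - intros x Hx. rewrite Rmin_left, Rmax_right in Hx by lra.
    rewrite (Hg_v x) by lra. change (A * x / sqrt (A ^ 2 * x ^ 2 + w) * v x
      = A * x * v x / sqrt (A ^ 2 * x ^ 2 + w)). unfold Rdiv. ring.
  - apply (@ex_RInt_continuous R_CompleteNormedModule).
    intros z Hz. rewrite Rmin_left, Rmax_right in Hz by lra.
    apply (continuous_mult (fun t => A * t / sqrt (A ^ 2 * t ^ 2 + w)) g).
    + apply (@ex_derive_continuous R_AbsRing R_NormedModule).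
      assert (0 <= A ^ 2 * z ^ 2) by nra.
      auto_derive. split; [lra|split; [|easy]].
      apply Rgt_not_eq, sqrt_lt_R0. lra.
    + apply Hg_cont. lra.
Qed.

Lemma sol_integrand_le (t : R) : 0 < t ->
  A * t * v t / sqrt (A ^ 2 * t ^ 2 + w) <= A * t / sqrt w.
Proof.
  intros Ht.
  assert (0 < v t) by now apply sol_pos.
  assert (v t <= 1) by now apply sol_le_one.
  assert (0 < sqrt w) by now apply sqrt_lt_R0.
  assert (sqrt w <= sqrt (A ^ 2 * t ^ 2 + w)) by (apply sqrt_le_1_alt; nra).
  assert (0 < A * t) by nra.
  apply Rle_trans with (A * t / sqrt (A ^ 2 * t ^ 2 + w)).
  - unfold Rdiv. apply Rmult_le_compat_r; [apply Rlt_le, Rinv_0_lt_compat; lra|nra].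
  - unfold Rdiv. apply Rmult_le_compat_l; [lra|]. apply Rinv_le_contravar; lra.
Qed.

Lemma sol_integral_lt (T : R) : 0 < T ->
  RInt (fun t => A * t * v t / sqrt (A ^ 2 * t ^ 2 + w)) 0 T < 1 / (v T * sqrt w).
Proof.
  intros HT.
  assert (Hs : 0 < sqrt w) by now apply sqrt_lt_R0.
  assert (HvT : 0 < v T) by now apply sol_pos.
  assert (Hlin : is_RInt (fun t => A * t / sqrt w) 0 T (A * T ^ 2 / (2 * sqrt w))).
  { replace (A * T ^ 2 / (2 * sqrt w))
      with (minus (A * T ^ 2 / (2 * sqrt w)) (A * 0 ^ 2 / (2 * sqrt w)))
      by (unfold minus, plus, opp; simpl; field; lra).
    apply (@is_RInt_derive R_CompleteNormedModule (fun x => A * x ^ 2 / (2 * sqrt w))).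
    - intros x _. auto_derive; [lra|field; lra].
    - intros x _. apply (@ex_derive_continuous R_AbsRing R_NormedModule).
      auto_derive. lra. }
  apply Rle_lt_trans with (A * T ^ 2 / (2 * sqrt w)).
  - rewrite <- (is_RInt_unique _ _ _ _ Hlin).
    apply RInt_le; [lra|apply ex_RInt_sol_integrand; lra|eexists; apply Hlin|].
    intros x Hx. apply sol_integrand_le. lra.
  - replace (1 / (v T * sqrt w)) with ((2 / v T) / (2 * sqrt w)) by (field; lra).
    apply Rmult_lt_compat_r; [apply Rinv_0_lt_compat; lra|].
    now apply sol_time_bound.
Qed.

End Integral.

End Solution.

Theorem mainTheorem8 (A vn : R) (v : R -> R -> R) (t_end : R -> R) :
  0 < A -> 0 < vn -> vn < 1 ->
  is_v_solution A v -> is_t_end v vn t_end ->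
  (forall w : R, 0 <= w -> A * (t_end w) ^ 2 < 2 / vn) /\
  (forall w : R, 0 < w -> I_int A v t_end w < 1 / (vn * sqrt w)) /\
  (forall B w : R, 0 < B -> 0 < w -> I_int A v t_end w = B ->
     w <= 1 / (vn ^ 2 * B ^ 2)).
Proof.
  intros HA Hvn _ Hsol Hend.
  assert (HI : forall w : R, 0 < w -> I_int A v t_end w < 1 / (vn * sqrt w)).
  { intros w Hw. destruct (Hsol w (Rlt_le _ _ Hw)) as [_ [Hr Hd]].
    destruct (Hend w (Rlt_le _ _ Hw)) as [HT <-].
    unfold I_int. apply sol_integral_lt; auto; lra. }
  split; [|split; [exact HI|]].
  - intros w Hw. destruct (Hsol w Hw) as [_ [Hr Hd]].
    destruct (Hend w Hw) as [HT <-].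
    now apply (sol_time_bound A w).
  - intros B w HB Hw HIB.
    apply le_inv_sq_of_lt_inv_mul_sqrt; [easy|easy|easy|].
    rewrite <- HIB. now apply HI.
Qed.
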